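(* Let $\mathsf{M}$ be the subspace of $\ell_1$ with underlying set $\{x \in \prod_{i\in\mathbb{N}} M_i : \sum_{i\in\mathbb{N}} |x(i)| < \infty\}$, where $M_i = \{ j\cdot 2^{-i} \mid j \in \{0,\dots,2^i\}\}$. Then the unit ball $B_{\mathsf{M}}(0^\omega;1) := \{x \in \mathsf{M} : \|x\|_1 < 1\}$ does not contain any clopen (in $\mathsf{M}$) neighbourhood of the constant zero sequence $0^\omega$.
   Context: $\ell_1$ is the set of real sequences $x\in\mathbb{R}^{\mathbb{N}}$ with $\|x\|_1=\sum_{i\in\mathbb{N}}|x(i)|<\infty$, equipped with the topology induced by the metric $(x,y)\mapsto \|x-y\|_1$. $\mathsf{M}$ carries the subspace topology from $\ell_1$. *)

From Stdlib Require Import Reals.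
From Coquelicot Require Import Coquelicot.
Open Scope R_scope.

Definition Mi (i : nat) (r : R) : Prop :=
  exists j : nat, (j <= 2 ^ i)%nat /\ r = INR j / 2 ^ i.

Definition in_l1 (x : nat -> R) : Prop := ex_series (fun i => Rabs (x i)).

Definition norm1 (x : nat -> R) : R := Series (fun i => Rabs (x i)).

Definition dist1 (x y : nat -> R) : R := norm1 (fun i => x i - y i).

Definition inM (x : nat -> R) : Prop := (forall i, Mi i (x i)) /\ in_l1 x.

Definition openM (U : (nat -> R) -> Prop) : Prop :=
  forall x, U x -> exists eps, 0 < eps /\
    forall y, inM y -> dist1 x y < eps -> U y.

Definition closedM (U : (nat -> R) -> Prop) : Prop :=
  openM (fun x => inM x /\ ~ U x).

Definition zero_seq : nat -> R := fun _ => 0.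

(* Greedily build a point x of M one coordinate at a time, keeping every finite
   truncation x|n inside U: the coordinate x n is 2^-(k+1), where k is the least index
   below n such that the M-ball of radius 2^-k about x|n lies in U (and x n = 0 if there is none). Since the
   truncations lie in U, their norms stay below 1, so x is summable and x|n -> x; as U is
   closed in M, x is in U. As U is open, a ball of some radius 2^-j about x lies in U, hence
   so does the ball of radius 2^-j about x|n for n large, which forces x n >= 2^-(j+1) for all
   large n, contradicting x n -> 0. *)

From Stdlib Require Import Reals Lra Lia ClassicalEpsilon FunctionalExtensionality.
From Coquelicot Require Import Coquelicot.
Open Scope R_scope.

Lemma is_series_eventually_0 (a : nat -> R) (N : nat) :
  (forall i, (N < i)%nat -> a i = 0) -> is_series a (sum_n a N).
Proof.
  intros Ha.
  assert (Hstable : forall m, (N <= m)%nat -> sum_n a m = sum_n a N).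
  { intros m Hm. induction Hm as [|m Hm IH]; [reflexivity|].
    rewrite sum_Sn, IH, Ha by lia. unfold plus; simpl; ring. }
  change (is_lim_seq (sum_n a) (sum_n a N)).
  apply is_lim_seq_ext_loc with (fun _ => sum_n a N).
  - exists N. intros m Hm. symmetry. apply Hstable; lia.
  - apply is_lim_seq_const.
Qed.

Lemma sum_n_zero_below (a : nat -> R) (n : nat) :
  (forall i, (i < n)%nat -> a i = 0) -> sum_n a n = a n.
Proof.
  intros Ha. destruct n as [|m]; [apply sum_O|].
  rewrite sum_Sn, (sum_n_ext_loc a (fun _ => 0)), sum_n_const by (intros; apply Ha; lia).
  unfold plus; simpl; ring.
Qed.

Lemma exists_inv_pow2_lt (eps : R) : 0 < eps -> exists j, / 2 ^ j < eps.
Proof.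
  intros Heps.
  destruct (pow_lt_1_zero (/ 2) ltac:(rewrite Rabs_pos_eq; lra) eps Heps) as [j Hj].
  exists j. specialize (Hj j (le_n _)).
  rewrite Rabs_pos_eq, pow_inv in Hj by (apply pow_le; lra). exact Hj.
Qed.

Lemma inv_pow2_pos (k : nat) : 0 < / 2 ^ k.
Proof. apply Rinv_0_lt_compat, pow_lt; lra. Qed.

Lemma inv_pow2_le (j k : nat) : (j <= k)%nat -> / 2 ^ k <= / 2 ^ j.
Proof. intros Hjk. apply Rinv_le_contravar; [apply pow_lt; lra|apply Rle_pow; [lra|exact Hjk]]. Qed.

Lemma inv_pow2_S_lt (k : nat) : / 2 ^ S k < / 2 ^ k.
Proof.
  apply Rinv_lt_contravar.
  - apply Rmult_lt_0_compat; apply pow_lt; lra.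
  - simpl. pose proof (pow_lt 2 k). lra.
Qed.

Lemma in_l1_minus (x y : nat -> R) :
  in_l1 x -> in_l1 y -> in_l1 (fun i => x i - y i).
Proof.
  intros Hx Hy. apply (@ex_series_le R_AbsRing R_CompleteNormedModule) with (fun i => Rabs (x i) + Rabs (y i)).
  - intros n. change norm with Rabs. rewrite Rabs_Rabsolu.
    unfold Rminus. rewrite <- (Rabs_Ropp (y n)). apply Rabs_triang.
  - exact (ex_series_plus _ _ Hx Hy).
Qed.

Lemma dist1_triangle (x y z : nat -> R) :
  in_l1 x -> in_l1 y -> in_l1 z -> dist1 x z <= dist1 x y + dist1 y z.
Proof.
  intros Hx Hy Hz. unfold dist1, norm1.
  rewrite <- Series_plus by (apply in_l1_minus; assumption).
  apply Series_le.
  - intros n. split; [apply Rabs_pos|].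
    replace (x n - z n) with ((x n - y n) + (y n - z n)) by ring. apply Rabs_triang.
  - apply (ex_series_plus (fun i => Rabs (x i - y i)) (fun i => Rabs (y i - z i)));
      apply in_l1_minus; assumption.
Qed.

Definition trunc (x : nat -> R) (n : nat) : nat -> R :=
  fun i => if (i <? n)%nat then x i else 0.

Lemma trunc_succ_eq (x : nat -> R) (n : nat) : x n = 0 -> trunc x (S n) = trunc x n.
Proof.
  intros Hxn. apply functional_extensionality. intros i. unfold trunc.
  destruct (Nat.ltb_spec i (S n)), (Nat.ltb_spec i n); try reflexivity; try lia.
  replace i with n by lia. exact Hxn.
Qed.

Lemma norm1_trunc_S (x : nat -> R) (k : nat) :
  norm1 (trunc x (S k)) = sum_n (fun i => Rabs (x i)) k.
Proof.
  unfold norm1. rewrite (sum_n_ext_loc _ (fun i => Rabs (trunc x (S k) i))).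
  - apply is_series_unique, is_series_eventually_0. intros i Hi. unfold trunc.
    destruct (Nat.ltb_spec i (S k)); [lia|apply Rabs_R0].
  - intros i Hi. unfold trunc. destruct (Nat.ltb_spec i (S k)); [reflexivity|lia].
Qed.

Lemma in_l1_trunc (x : nat -> R) (n : nat) : in_l1 (trunc x n).
Proof.
  eexists. apply (is_series_eventually_0 _ n). intros i Hi. unfold trunc.
  destruct (Nat.ltb_spec i n); [lia|apply Rabs_R0].
Qed.

Lemma in_l1_of_norm1_trunc_bounded (x : nat -> R) (B : R) :
  (forall n, norm1 (trunc x n) <= B) -> in_l1 x.
Proof.
  intros HB. destruct (ex_finite_lim_seq_incr (sum_n (fun i => Rabs (x i))) B) as [l Hl].
  - intros n. rewrite sum_Sn. unfold plus; simpl. pose proof (Rabs_pos (x (S n))). lra.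
  - intros n. rewrite <- norm1_trunc_S. apply HB.
  - exists l. exact Hl.
Qed.

Lemma dist1_trunc_succ (x : nat -> R) (n : nat) :
  dist1 (trunc x n) (trunc x (S n)) = Rabs (x n).
Proof.
  unfold dist1, norm1. set (d := fun i => Rabs (trunc x n i - trunc x (S n) i)).
  assert (Hd : forall i, i <> n -> d i = 0).
  { intros i Hi. unfold d, trunc.
    destruct (Nat.ltb_spec i n), (Nat.ltb_spec i (S n)); try lia;
      rewrite Rminus_diag; apply Rabs_R0. }
  rewrite (is_series_unique d (sum_n d n)).
  - rewrite sum_n_zero_below by (intros i Hi; apply Hd; lia).
    unfold d, trunc. rewrite Nat.ltb_irrefl.
    destruct (Nat.ltb_spec n (S n)); [|lia]. rewrite Rminus_0_l. apply Rabs_Ropp.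
  - apply is_series_eventually_0. intros i Hi. apply Hd. lia.
Qed.

Lemma dist1_trunc (x : nat -> R) (n : nat) :
  in_l1 x -> dist1 x (trunc x n) = norm1 x - norm1 (trunc x n).
Proof.
  intros Hx. unfold dist1, norm1. rewrite <- Series_minus by (exact Hx || apply in_l1_trunc).
  apply Series_ext. intros i. unfold trunc. destruct (Nat.ltb_spec i n).
  - rewrite Rminus_diag, Rabs_R0. ring.
  - rewrite Rminus_0_r, Rabs_R0. ring.
Qed.

Lemma dist1_trunc_small (x : nat -> R) :
  in_l1 x -> forall eps, 0 < eps -> exists N, forall n, (N <= n)%nat -> dist1 x (trunc x n) < eps.
Proof.
  intros Hx eps Heps.
  pose proof (Series_correct _ Hx) as Hs.
  change (is_lim_seq (sum_n (fun i => Rabs (x i))) (norm1 x)) in Hs.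
  apply is_lim_seq_spec in Hs.
  destruct (Hs (mkposreal eps Heps)) as [N HN].
  exists (S N). intros [|m] Hm; [lia|].
  rewrite dist1_trunc, norm1_trunc_S by exact Hx.
  specialize (HN m ltac:(lia)). simpl in HN. rewrite Rabs_minus_sym in HN.
  eapply Rle_lt_trans; [apply Rle_abs|exact HN].
Qed.

Lemma in_l1_eventually_lt (x : nat -> R) (c : R) :
  in_l1 x -> 0 < c -> exists N, forall n, (N <= n)%nat -> x n < c.
Proof.
  intros Hx Hc. pose proof (ex_series_lim_0 _ (ex_series_Rabs _ Hx)) as Hlim.
  apply is_lim_seq_spec in Hlim. destruct (Hlim (mkposreal c Hc)) as [N HN].
  exists N. intros n Hn. specialize (HN n Hn). simpl in HN.
  rewrite Rminus_0_r in HN. eapply Rle_lt_trans; [apply Rle_abs|exact HN].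
Qed.

Lemma Mi_0 (i : nat) : Mi i 0.
Proof. exists 0%nat. split; [lia|]. simpl. field. apply pow_nonzero; lra. Qed.

Lemma Mi_inv_pow2 (i k : nat) : (k <= i)%nat -> Mi i (/ 2 ^ k).
Proof.
  intros Hk. exists (2 ^ (i - k))%nat. split.
  - apply Nat.pow_le_mono_r; lia.
  - rewrite pow_INR. replace (INR 2) with 2 by (simpl; ring).
    replace (2 ^ i) with (2 ^ k * 2 ^ (i - k)) by (rewrite <- pow_add; f_equal; lia).
    field. split; apply pow_nonzero; lra.
Qed.

Lemma inM_trunc (x : nat -> R) (n : nat) : (forall i, Mi i (x i)) -> inM (trunc x n).
Proof.
  intros Hx. split; [|apply in_l1_trunc].
  intros i. unfold trunc. destruct (i <? n)%nat; [apply Hx|apply Mi_0].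
Qed.

Lemma closedM_limit (U : (nat -> R) -> Prop) (x : nat -> R) :
  closedM U -> inM x ->
  (forall eps, 0 < eps -> exists y, inM y /\ U y /\ dist1 x y < eps) -> U x.
Proof.
  intros HU Hx Happrox. destruct (classic (U x)) as [HUx|HUx]; [exact HUx|].
  destruct (HU x (conj Hx HUx)) as [eps [Heps Hball]].
  destruct (Happrox eps Heps) as [y [Hy [HUy Hxy]]].
  destruct (Hball y Hy Hxy) as [_ HnUy]. contradiction.
Qed.

Lemma openM_dyadic_ball (U : (nat -> R) -> Prop) (x : nat -> R) :
  openM U -> U x -> in_l1 x ->
  exists j, forall y z, in_l1 y -> inM z -> dist1 x y < / 2 ^ j -> dist1 y z < / 2 ^ j -> U z.
Proof.
  intros HU HUx Hx. destruct (HU x HUx) as [eps [Heps Hball]].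
  destruct (exists_inv_pow2_lt (eps / 2)) as [j Hj]; [lra|].
  exists j. intros y z Hy Hz Hxy Hyz. apply Hball; [exact Hz|].
  pose proof (dist1_triangle x y z Hx Hy (proj2 Hz)). lra.
Qed.

Section FirstBelow.

Variable p : nat -> Prop.

(* The least k < n with p k, or n if there is none. *)
Fixpoint first_below (n : nat) : nat :=
  match n with
  | O => O
  | S m => if excluded_middle_informative (p (first_below m)) then first_below m else S m
  end.

Lemma first_below_le (n : nat) : (first_below n <= n)%nat.
Proof.
  induction n as [|n IH]; simpl; [lia|].
  destruct excluded_middle_informative; lia.
Qed.

Lemma first_below_spec (n : nat) : (first_below n < n)%nat -> p (first_below n).
Proof.
  induction n as [|n IH]; simpl; [lia|].
  destruct excluded_middle_informative as [Hp|Hp]; [easy|lia].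
Qed.

Lemma first_below_min (n j : nat) : p j -> (j <= n)%nat -> (first_below n <= j)%nat.
Proof.
  intros Hj. induction n as [|n IH]; intros Hjn; simpl; [lia|].
  pose proof (first_below_le n) as Hle.
  destruct excluded_middle_informative as [Hp|Hp].
  - destruct (Nat.eq_dec j (S n)); [lia|]. apply IH. lia.
  - destruct (Nat.eq_dec j (S n)); [lia|].
    specialize (IH ltac:(lia)).
    destruct (Nat.eq_dec (first_below n) n) as [Hn|Hn].
    + replace j with (first_below n) in Hj by lia. contradiction.
    + exfalso. apply Hp, first_below_spec. lia.
Qed.

End FirstBelow.

Section Greedy.

Variable U : (nat -> R) -> Prop.

Definition dyadic_ball_in (y : nat -> R) (k : nat) : Prop :=
  forall z, inM z -> dist1 y z < / 2 ^ k -> U z.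

Definition greedy_coord (y : nat -> R) (n : nat) : R :=
  let k := first_below (dyadic_ball_in y) n in
  if (k <? n)%nat then / 2 ^ S k else 0.

Fixpoint greedy_prefix (n : nat) : nat -> R :=
  match n with
  | O => zero_seq
  | S m => fun i => if (i =? m)%nat then greedy_coord (greedy_prefix m) m else greedy_prefix m i
  end.

Definition greedy (i : nat) : R := greedy_prefix (S i) i.

Lemma greedy_prefix_trunc (n : nat) : greedy_prefix n = trunc greedy n.
Proof.
  induction n as [|n IH]; apply functional_extensionality; intros i; unfold trunc.
  - reflexivity.
  - simpl. destruct (Nat.eqb_spec i n) as [->|Hin].
    + destruct (Nat.ltb_spec n (S n)); [|lia]. unfold greedy. simpl. now rewrite Nat.eqb_refl.
    + rewrite IH. unfold trunc.
      destruct (Nat.ltb_spec i n), (Nat.ltb_spec i (S n)); try reflexivity; lia.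
Qed.

Lemma greedy_eq (n : nat) : greedy n = greedy_coord (trunc greedy n) n.
Proof. unfold greedy. simpl. now rewrite Nat.eqb_refl, greedy_prefix_trunc. Qed.

Lemma greedy_coord_Mi (y : nat -> R) (n : nat) : Mi n (greedy_coord y n).
Proof.
  unfold greedy_coord. destruct (Nat.ltb_spec (first_below (dyadic_ball_in y) n) n).
  - apply Mi_inv_pow2. lia.
  - apply Mi_0.
Qed.

Lemma greedy_coord_ge (y : nat -> R) (n j : nat) :
  dyadic_ball_in y j -> (j < n)%nat -> / 2 ^ S j <= greedy_coord y n.
Proof.
  intros Hj Hjn. pose proof (first_below_min _ n j Hj ltac:(lia)) as Hmin.
  unfold greedy_coord. destruct (Nat.ltb_spec (first_below (dyadic_ball_in y) n) n); [|lia].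
  apply inv_pow2_le. lia.
Qed.

Lemma inM_trunc_greedy (n : nat) : inM (trunc greedy n).
Proof. apply inM_trunc. intros i. rewrite greedy_eq. apply greedy_coord_Mi. Qed.

Hypothesis U_zero : U zero_seq.

Lemma trunc_greedy_in_U (n : nat) : U (trunc greedy n).
Proof.
  induction n as [|n IH].
  - rewrite <- greedy_prefix_trunc. exact U_zero.
  - pose proof (greedy_eq n) as Hn. unfold greedy_coord in Hn.
    set (k := first_below (dyadic_ball_in (trunc greedy n)) n) in Hn.
    destruct (Nat.ltb_spec k n) as [Hk|Hk].
    + apply (first_below_spec _ n Hk); [apply inM_trunc_greedy|].
      rewrite dist1_trunc_succ, Hn, Rabs_pos_eq by (apply Rlt_le, inv_pow2_pos).
      apply inv_pow2_S_lt.
    + rewrite trunc_succ_eq by exact Hn. exact IH.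
Qed.

Hypothesis U_in_ball : forall x, U x -> norm1 x < 1.

Lemma in_l1_greedy : in_l1 greedy.
Proof.
  apply (in_l1_of_norm1_trunc_bounded _ 1). intros n.
  apply Rlt_le, U_in_ball, trunc_greedy_in_U.
Qed.

Lemma greedy_in_U : closedM U -> U greedy.
Proof.
  intros HU. apply closedM_limit; [exact HU|split; [|exact in_l1_greedy]|].
  - intros i. rewrite greedy_eq. apply greedy_coord_Mi.
  - intros eps Heps. destruct (dist1_trunc_small _ in_l1_greedy eps Heps) as [N HN].
    exists (trunc greedy N). split; [apply inM_trunc_greedy|].
    split; [apply trunc_greedy_in_U|apply HN; lia].
Qed.

End Greedy.

Theorem lemma2p2 :
  ~ exists U : (nat -> R) -> Prop,
      (forall x, U x -> inM x) /\
      openM U /\ closedM U /\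
      U zero_seq /\
      (forall x, U x -> norm1 x < 1).
Proof.
  intros [U [_ [HUo [HUc [HU0 HU1]]]]].
  pose proof (in_l1_greedy U HU0 HU1) as Hl1.
  destruct (openM_dyadic_ball U _ HUo (greedy_in_U U HU0 HU1 HUc) Hl1) as [j Hj].
  destruct (dist1_trunc_small _ Hl1 _ (inv_pow2_pos j)) as [N1 HN1].
  destruct (in_l1_eventually_lt _ _ Hl1 (inv_pow2_pos (S j))) as [N2 HN2].
  set (n := (N1 + N2 + S j)%nat).
  assert (Hball : dyadic_ball_in U (trunc (greedy U) n) j).
  { intros z Hz Hd. apply (Hj _ z (in_l1_trunc (greedy U) n) Hz); [apply HN1; lia|exact Hd]. }
  pose proof (greedy_coord_ge U _ n j Hball ltac:(lia)) as Hge.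
  rewrite <- greedy_eq in Hge.
  specialize (HN2 n ltac:(lia)). lra.
Qed.
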